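(* Let $\mathcal{M}_{AK}=(W_A, W_K, (R_y)_{y \in W_K}, (S_x)_{x \in W_A}, V)$ be an AK model and $\mathcal{M}^\beta_{EL}$ its induced EL model. Then for every EL formula $\varphi$, every $x\in W_A$ and every $y\in W_K$: $\mathcal{M}_{AK},(x,y)\models T(\varphi)$ if and only if $\mathcal{M}^\beta_{EL},y\models\varphi$.
   Context: Epistemic logic: disjoint sets $\mathbf{Prop}$, $\mathbf{A}$; formulas $\varphi ::= p \mid \neg\varphi \mid \varphi\land\varphi \mid K_i\varphi$; EL models $(W,(R_i)_{i\in\mathbf{A}},V)$ with $W\neq\emptyset$, $R_i\subseteq W\times W$, $V:\mathbf{Prop}\to\mathcal{P}(W)$; $w\models p$ iff $w\in V(p)$, Booleans as usual, $w\models K_i\varphi$ iff $v\models\varphi$ for all $v$ with $wR_iv$. Agent-knowledge logic: pairwise disjoint sets $\mathbf{Prop}_A,\mathbf{Prop}_K,\mathbf{Nom}_A,\mathbf{Nom}_K$; formulas $\varphi ::= p_A \mid p_K \mid a \mid k \mid \neg\varphi \mid \varphi\land\varphi \mid \Box_A\varphi \mid \Box_K\varphi \mid @_a\varphi \mid @_k\varphi$. AK models $(W_A, W_K, (R_y)_{y \in W_K}, (S_x)_{x \in W_A}, V)$: $W_A,W_K$ non-empty, $R_y\subseteq W_A\times W_A$, $S_x\subseteq W_K\times W_K$, $V$ sends $\mathbf{Prop}_A\cup\mathbf{Nom}_A$ to subsets of $W_A$ and $\mathbf{Prop}_K\cup\mathbf{Nom}_K$ to subsets of $W_K$, with $V(a)=\{a^V\}$,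 $V(k)=\{k^V\}$ singletons for nominals. Satisfaction at $(x,y)$: $p_A$ iff $x\in V(p_A)$; $p_K$ iff $y\in V(p_K)$; $a$ iff $x=a^V$; $k$ iff $y=k^V$; Booleans as usual; $\Box_A\varphi$ iff $(x',y)\models\varphi$ for all $x'$ with $xR_yx'$; $\Box_K\varphi$ iff $(x,y')\models\varphi$ for all $y'$ with $yS_xy'$; $@_a\varphi$ iff $(a^V,y)\models\varphi$; $@_k\varphi$ iff $(x,k^V)\models\varphi$. Translation $T$: bijections $\mathbf{Prop}\to\mathbf{Prop}_K$ and $\mathbf{A}\to\mathbf{Nom}_A$, $T(\neg\varphi)=\neg T(\varphi)$, $T(\varphi\land\psi)=T(\varphi)\land T(\psi)$, $T(K_i\varphi)=@_{T(i)}\Box_KT(\varphi)$. Induced EL model: $\mathcal{M}^\beta_{EL}=(W_K,(S^\beta_i)_{i\in\mathbf{A}},V^\beta)$ where $y S^\beta_i z$ iff $y S_{T(i)^V} z$ in $\mathcal{M}_{AK}$, and $V^\beta(p)=V(T(p))$ for $p\in\mathbf{Prop}$. *)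

Inductive el_form (Prp Ag : Type) : Type :=
| ELvar : Prp -> el_form Prp Ag
| ELneg : el_form Prp Ag -> el_form Prp Ag
| ELand : el_form Prp Ag -> el_form Prp Ag -> el_form Prp Ag
| ELK   : Ag -> el_form Prp Ag -> el_form Prp Ag.
Arguments ELvar {Prp Ag} _.
Arguments ELneg {Prp Ag} _.
Arguments ELand {Prp Ag} _ _.
Arguments ELK {Prp Ag} _ _.

Record el_model (Prp Ag : Type) : Type := {
  el_W : Type;
  el_W_ne : inhabited el_W;
  el_R : Ag -> el_W -> el_W -> Prop;
  el_V : Prp -> el_W -> Prop }.
Arguments el_W {Prp Ag} _.
Arguments el_R {Prp Ag} _ _ _ _.
Arguments el_V {Prp Ag} _ _ _.

Fixpoint el_sat {Prp Ag} (M : el_model Prp Ag) (w : el_W M) (f : el_form Prp Ag) : Prop :=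
  match f with
  | ELvar p => el_V M p w
  | ELneg g => ~ el_sat M w g
  | ELand g h => el_sat M w g /\ el_sat M w h
  | ELK i g => forall v, el_R M i w v -> el_sat M v g
  end.

(** The four pairwise disjoint sets of atoms are
    represented by four separate types PA (Prop_A), PK (Prop_K),
    NA (Nom_A), NK (Nom_K); formulas keep them apart via constructors. *)
Inductive ak_form (PA PK NA NK : Type) : Type :=
| AKpa  : PA -> ak_form PA PK NA NK
| AKpk  : PK -> ak_form PA PK NA NK
| AKna  : NA -> ak_form PA PK NA NK
| AKnk  : NK -> ak_form PA PK NA NK
| AKneg : ak_form PA PK NA NK -> ak_form PA PK NA NK
| AKand : ak_form PA PK NA NK -> ak_form PA PK NA NK -> ak_form PA PK NA NK
| AKboxA : ak_form PA PK NA NK -> ak_form PA PK NA NK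
| AKboxK : ak_form PA PK NA NK -> ak_form PA PK NA NK
| AKatA : NA -> ak_form PA PK NA NK -> ak_form PA PK NA NK
| AKatK : NK -> ak_form PA PK NA NK -> ak_form PA PK NA NK.
Arguments AKpa {PA PK NA NK} _.
Arguments AKpk {PA PK NA NK} _.
Arguments AKna {PA PK NA NK} _.
Arguments AKnk {PA PK NA NK} _.
Arguments AKneg {PA PK NA NK} _.
Arguments AKand {PA PK NA NK} _ _.
Arguments AKboxA {PA PK NA NK} _.
Arguments AKboxK {PA PK NA NK} _.
Arguments AKatA {PA PK NA NK} _ _.
Arguments AKatK {PA PK NA NK} _ _.

(** AK model.  Valuation of nominals is given directly by their denotation
    (a^V, k^V), which is equivalent to V(a) = {a^V} being a singleton. *)
Record ak_model (PA PK NA NK : Type) : Type := {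
  WA : Type;
  WK : Type;
  WA_ne : inhabited WA;
  WK_ne : inhabited WK;
  akR : WK -> WA -> WA -> Prop;
  akS : WA -> WK -> WK -> Prop;
  VA : PA -> WA -> Prop;
  VK : PK -> WK -> Prop;
  nomA : NA -> WA;
  nomK : NK -> WK }.
Arguments WA {PA PK NA NK} _.
Arguments WK {PA PK NA NK} _.
Arguments akR {PA PK NA NK} _ _ _ _.
Arguments akS {PA PK NA NK} _ _ _ _.
Arguments VA {PA PK NA NK} _ _ _.
Arguments VK {PA PK NA NK} _ _ _.
Arguments nomA {PA PK NA NK} _ _.
Arguments nomK {PA PK NA NK} _ _.

Fixpoint ak_sat {PA PK NA NK} (M : ak_model PA PK NA NK)
    (x : WA M) (y : WK M) (f : ak_form PA PK NA NK) : Prop :=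
  match f with
  | AKpa p => VA M p x
  | AKpk p => VK M p y
  | AKna a => x = nomA M a
  | AKnk k => y = nomK M k
  | AKneg g => ~ ak_sat M x y g
  | AKand g h => ak_sat M x y g /\ ak_sat M x y h
  | AKboxA g => forall x', akR M y x x' -> ak_sat M x' y g
  | AKboxK g => forall y', akS M x y y' -> ak_sat M x y' g
  | AKatA a g => ak_sat M (nomA M a) y g
  | AKatK k g => ak_sat M x (nomK M k) g
  end.

Definition is_bijection {A B : Type} (f : A -> B) : Prop :=
  (forall a1 a2, f a1 = f a2 -> a1 = a2) /\ (forall b, exists a, f a = b).

Fixpoint transl {Prp Ag PA PK NA NK} (tp : Prp -> PK) (ta : Ag -> NA)
    (f : el_form Prp Ag) : ak_form PA PK NA NK :=
  match f with
  | ELvar p => AKpk (tp p)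
  | ELneg g => AKneg (transl tp ta g)
  | ELand g h => AKand (transl tp ta g) (transl tp ta h)
  | ELK i g => AKatA (ta i) (AKboxK (transl tp ta g))
  end.

Definition induced_el {Prp Ag PA PK NA NK} (tp : Prp -> PK) (ta : Ag -> NA)
    (M : ak_model PA PK NA NK) : el_model Prp Ag :=
  {| el_W := WK M;
     el_W_ne := WK_ne _ _ _ _ M;
     el_R := fun i y z => akS M (nomA M (ta i)) y z;
     el_V := fun p y => VK M (tp p) y |}.


Lemma ak_sat_transl {Prp Ag PA PK NA NK : Type}
    (tp : Prp -> PK) (ta : Ag -> NA) (M : ak_model PA PK NA NK)
    (phi : el_form Prp Ag) :
  forall (x : WA M) (y : WK M),
    ak_sat M x y (transl tp ta phi) <-> el_sat (induced_el tp ta M) y phi.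
Proof.
  induction phi as [p | g IHg | g IHg h IHh | i g IHg]; intros x y; simpl.
  - tauto.
  - pose proof (IHg x y); tauto.
  - pose proof (IHg x y); pose proof (IHh x y); tauto.
  - (* [@_(ta i)] moves the agent coordinate to the nominal's denotation,
       which the induction hypothesis allows since it holds for every [x]. *)
    split; intros H z Hz.
    + now apply (IHg (nomA M (ta i))), H.
    + now apply IHg, H.
Qed.

Theorem mainTheorem4 (Prp Ag PA PK NA NK : Type)
  (tp : Prp -> PK) (ta : Ag -> NA)
  (Htp : is_bijection tp) (Hta : is_bijection ta)
  (M : ak_model PA PK NA NK) :
  forall (phi : el_form Prp Ag) (x : WA M) (y : WK M),
    ak_sat M x y (transl tp ta phi) <-> el_sat (induced_el tp ta M) y phi.
Proof.
  intros phi.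
  exact (ak_sat_transl tp ta M phi).
Qed.
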